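(* Let $r\ge2$ be an integer and $\psi\in C_p(\mathbb{R})$. Then for every $n\in\mathbb{N}_0$, $k\in\{0,1,\dots,r^n-1\}$ and $y\in(0,1)$, $$\Delta_{n,k}(y;U_\psi)=\sum_{j=0}^{n-1} r^j\,\Delta_{n-j,k}(y;\psi)-\frac{2r^n}{y(1-y)}\,U_\psi(y),$$ where for $n=0$ the sum is interpreted as $0$.
   Context: $C_p(\mathbb{R})$ denotes the set of all continuous functions $f:\mathbb{R}\to\mathbb{R}$ periodic with period $1$ with $f(0)=0$; $\mathbb{N}_0=\mathbb{N}\cup\{0\}$. For $\psi\in C_p(\mathbb{R})$, $U_\psi(x)=\sum_{j=0}^\infty r^{-j}\psi(r^jx)$, $x\in\mathbb{R}$ (then $U_\psi\in C_p(\mathbb{R})$). For $f\in C_p(\mathbb{R})$ and $(n,k,y)\in\mathbb{N}_0\times\mathbb{Z}\times(0,1)$: $\delta^+_{n,k}(y;f)=\dfrac{f(\frac{k+1}{r^n})-f(\frac{k+y}{r^n})}{\frac{1-y}{r^n}}$, $\delta^-_{n,k}(y;f)=\dfrac{f(\frac{k+y}{r^n})-f(\frac{k}{r^n})}{\frac{y}{r^n}}$, $\Delta_{n,k}(y;f)=2r^n\big(\delta^+_{n,k}(y;f)-\delta^-_{n,k}(y;f)\big)$. *)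

From Stdlib Require Import Reals.
From Coquelicot Require Import Coquelicot.
Open Scope R_scope.

Definition Cp (f : R -> R) : Prop :=
  (forall x, continuous f x) /\ (forall x, f (x + 1) = f x) /\ f 0 = 0.

Definition U (r : R) (psi : R -> R) (x : R) : R :=
  Series (fun j : nat => / r ^ j * psi (r ^ j * x)).

Definition delta_plus (r : R) (n : nat) (k : Z) (y : R) (f : R -> R) : R :=
  (f ((IZR k + 1) / r ^ n) - f ((IZR k + y) / r ^ n)) / ((1 - y) / r ^ n).

Definition delta_minus (r : R) (n : nat) (k : Z) (y : R) (f : R -> R) : R :=
  (f ((IZR k + y) / r ^ n) - f (IZR k / r ^ n)) / (y / r ^ n).

Definition DeltaNK (r : R) (n : nat) (k : Z) (y : R) (f : R -> R) : R :=
  2 * r ^ n * (delta_plus r n k y f - delta_minus r n k y f).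

(** Δ_{n,k}(y; ·) is a linear combination of three point evaluations, so it
    commutes with the series defining U_ψ.  The j-th term r^{-j} ψ(r^j ·) is a
    rescaled copy of ψ: for j < n it contributes r^j Δ_{n-j,k}(y; ψ), while for
    j ≥ n the points k/r^n and (k+1)/r^n are sent to integers, where ψ vanishes,
    and (k+y)/r^n is sent to r^{j-n} y modulo 1.  The terms with j ≥ n thus sum
    to -2 r^n U_ψ(y) / (y(1-y)). *)

From Stdlib Require Import Reals List Lia Lra ZArith.
From Coquelicot Require Import Coquelicot.
Open Scope R_scope.

Definition dilation (r : R) (j : nat) (psi : R -> R) (x : R) : R :=
  / r ^ j * psi (r ^ j * x).

Section PeriodicFunctions.

Variable psi : R -> R.
Hypothesis psi_Cp : Cp psi.

Lemma Cp_periodic_INR (m : nat) (x : R) : psi (x + INR m) = psi x.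
Proof.
  destruct psi_Cp as [_ [psi_per _]].
  induction m as [|m IH].
  - simpl; f_equal; ring.
  - rewrite S_INR, <- IH, <- (psi_per (x + INR m)); f_equal; ring.
Qed.

Lemma Cp_periodic_IZR (m : Z) (x : R) : psi (x + IZR m) = psi x.
Proof.
  destruct (Z_le_gt_dec 0 m) as [Hm|Hm].
  - rewrite <- (Z2Nat.id m Hm), <- INR_IZR_INZ; apply Cp_periodic_INR.
  - replace m with (- Z.of_nat (Z.to_nat (- m)))%Z by lia.
    rewrite opp_IZR, <- INR_IZR_INZ, <- (Cp_periodic_INR (Z.to_nat (- m))).
    f_equal; ring.
Qed.

Lemma Cp_IZR_eq0 (m : Z) : psi (IZR m) = 0.
Proof.
  destruct psi_Cp as [_ [_ psi0]].
  rewrite <- psi0, <- (Cp_periodic_IZR m 0); f_equal; ring.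
Qed.

Lemma Cp_bounded : exists M, forall x, Rabs (psi x) <= M.
Proof.
  destruct psi_Cp as [psi_cont _].
  assert (Hcont : forall c, 0 <= c <= 1 -> continuity_pt psi c)
    by (intros c _; apply continuity_pt_filterlim, psi_cont).
  destruct (continuity_ab_maj psi 0 1 ltac:(lra) Hcont) as [xmax [Hmax _]].
  destruct (continuity_ab_min psi 0 1 ltac:(lra) Hcont) as [xmin [Hmin _]].
  exists (Rmax (Rabs (psi xmax)) (Rabs (psi xmin))); intros x.
  destruct (Zfloor_bound x) as [Hfl1 Hfl2].
  replace x with ((x - IZR (Zfloor x)) + IZR (Zfloor x)) by ring.
  rewrite Cp_periodic_IZR.
  assert (Hfrac : 0 <= x - IZR (Zfloor x) <= 1) by lra.
  specialize (Hmax _ Hfrac); specialize (Hmin _ Hfrac).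
  unfold Rmax; destruct Rle_dec; unfold Rabs in *; repeat destruct Rcase_abs; lra.
Qed.

End PeriodicFunctions.

Lemma ex_series_dilation (r : R) (psi : R -> R) (M x : R) :
  1 < r -> (forall t, Rabs (psi t) <= M) ->
  ex_series (fun j => dilation r j psi x).
Proof.
  intros Hr HM.
  apply (@ex_series_le R_AbsRing R_CompleteNormedModule _ (fun j => M * (/ r) ^ j)).
  - intros j; change norm with Rabs; unfold dilation.
    rewrite pow_inv.
    assert (Hpos : 0 < / r ^ j) by (apply Rinv_0_lt_compat, pow_lt; lra).
    rewrite Rabs_mult, (Rabs_right (/ r ^ j)), Rmult_comm by lra.
    apply Rmult_le_compat_r; [lra | apply HM].
  - apply (ex_series_scal_l M (fun j => (/ r) ^ j)), ex_series_geom.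
    assert (0 < / r < 1).
    { split; [apply Rinv_0_lt_compat; lra|].
      rewrite <- Rinv_1; apply Rinv_lt_contravar; lra. }
    rewrite Rabs_pos_eq; lra.
Qed.

Lemma is_series_DeltaNK (r : R) (n : nat) (k : Z) (y : R)
    (g : nat -> R -> R) (f : R -> R) :
  (forall x, is_series (fun j => g j x) (f x)) ->
  is_series (fun j => DeltaNK r n k y (g j)) (DeltaNK r n k y f).
Proof.
  intros Hg; unfold DeltaNK, delta_plus, delta_minus.
  set (x1 := (IZR k + 1) / r ^ n); set (xy := (IZR k + y) / r ^ n).
  set (x0 := IZR k / r ^ n).
  pose proof (is_series_minus _ _ _ _ (Hg x1) (Hg xy)) as Hplus.
  pose proof (is_series_minus _ _ _ _ (Hg xy) (Hg x0)) as Hminus.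
  apply (is_series_scal_r (/ ((1 - y) / r ^ n))) in Hplus.
  apply (is_series_scal_r (/ (y / r ^ n))) in Hminus.
  exact (is_series_scal_l (2 * r ^ n) _ _ (is_series_minus _ _ _ _ Hplus Hminus)).
Qed.

Lemma is_series_split (a : nat -> R) (n : nat) (l : R) :
  is_series (fun m => a (n + m)%nat) l ->
  is_series a (fold_right Rplus 0 (map a (seq 0 n)) + l).
Proof.
  revert a; induction n as [|n IH]; intros a Htail.
  - simpl; rewrite Rplus_0_l; exact Htail.
  - apply is_series_decr_1.
    replace (plus _ (opp (a 0%nat)))
      with (fold_right Rplus 0 (map (fun m => a (S m)) (seq 0 n)) + l).
    + apply IH; exact Htail.
    + rewrite <- (map_map S a), seq_shift; change plus with Rplus; change opp with Ropp.
      simpl; ring.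
Qed.

Lemma DeltaNK_dilation_low (r : R) (psi : R -> R) (n j : nat) (k : Z) (y : R) :
  0 < r -> (j <= n)%nat -> y <> 0 -> y <> 1 ->
  DeltaNK r n k y (dilation r j psi) = r ^ j * DeltaNK r (n - j) k y psi.
Proof.
  intros Hr Hjn Hy0 Hy1.
  assert (Hsplit : r ^ n = r ^ j * r ^ (n - j))
    by (rewrite <- pow_add; f_equal; lia).
  assert (Hj : 0 < r ^ j) by (apply pow_lt; lra).
  assert (Hnj : 0 < r ^ (n - j)) by (apply pow_lt; lra).
  assert (Hcancel : forall t, r ^ j * (t / r ^ n) = t / r ^ (n - j))
    by (intros t; rewrite Hsplit; field; lra).
  unfold DeltaNK, delta_plus, delta_minus, dilation; rewrite !Hcancel, Hsplit.
  field; repeat split; lra.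
Qed.

(** [r] is a natural number so that [r^(n+m)] maps the grid [k/r^n] into the integers. *)
Lemma DeltaNK_dilation_high (r : nat) (psi : R -> R) (n m : nat) (k : Z) (y : R) :
  Cp psi -> (0 < r)%nat -> y <> 0 -> y <> 1 ->
  DeltaNK (INR r) n k y (dilation (INR r) (n + m) psi) =
    - (2 * INR r ^ n / (y * (1 - y))) * dilation (INR r) m psi y.
Proof.
  intros psi_Cp Hr Hy0 Hy1.
  assert (Hpow : forall i, 0 < INR r ^ i) by (intros; apply pow_lt, lt_0_INR; lia).
  set (q := Z.of_nat (r ^ m)).
  assert (Hq : INR r ^ m = IZR q)
    by (unfold q; rewrite <- pow_INR; apply INR_IZR_INZ).
  assert (Hgrid : forall t, INR r ^ (n + m) * (t / INR r ^ n) = IZR q * t)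
    by (intros t; rewrite pow_add, <- Hq; specialize (Hpow n); field; lra).
  unfold DeltaNK, delta_plus, delta_minus, dilation; rewrite !Hgrid.
  replace (IZR q * (IZR k + 1)) with (IZR (q * k + q)) by (rewrite plus_IZR, mult_IZR; ring).
  replace (IZR q * IZR k) with (IZR (q * k)) by (rewrite mult_IZR; ring).
  replace (IZR q * (IZR k + y)) with (INR r ^ m * y + IZR (q * k))
    by (rewrite mult_IZR, Hq; ring).
  rewrite (Cp_periodic_IZR psi psi_Cp), !(Cp_IZR_eq0 psi psi_Cp).
  rewrite pow_add; pose proof (Hpow n); pose proof (Hpow m).
  field; repeat split; lra.
Qed.

Theorem theorem3p1 (r : nat) (psi : R -> R) :
  (2 <= r)%nat -> Cp psi ->
  forall (n : nat) (k : Z) (y : R),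
    (0 <= k)%Z -> (k < Z.of_nat (r ^ n))%Z -> 0 < y < 1 ->
    DeltaNK (INR r) n k y (U (INR r) psi) =
      fold_right Rplus 0
        (map (fun j : nat => INR r ^ j * DeltaNK (INR r) (n - j) k y psi) (seq 0 n))
      - 2 * INR r ^ n / (y * (1 - y)) * U (INR r) psi y.
Proof.
  (* The identity holds for every integer k. *)
  intros Hr2 psi_Cp n k y _ _ Hy.
  assert (Hr : 2 <= INR r) by (apply le_INR in Hr2; simpl in Hr2; lra).
  destruct (Cp_bounded psi psi_Cp) as [M HM].
  assert (HU : forall x, is_series (fun j => dilation (INR r) j psi x) (U (INR r) psi x))
    by (intros x; apply Series_correct, (ex_series_dilation _ _ M); auto; lra).
  rewrite <- (is_series_unique _ _ (is_series_DeltaNK (INR r) n k y _ _ HU)).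
  apply is_series_unique.
  unfold Rminus; rewrite Ropp_mult_distr_l.
  replace (map _ (seq 0 n))
    with (map (fun j => DeltaNK (INR r) n k y (dilation (INR r) j psi)) (seq 0 n)).
  - apply is_series_split.
    apply (is_series_ext (fun m => - (2 * INR r ^ n / (y * (1 - y))) * dilation (INR r) m psi y)).
    + intros m; rewrite DeltaNK_dilation_high; auto; lia || lra.
    + apply (is_series_scal_l _ _ _ (HU y)).
  - apply map_ext_in; intros j Hj; apply in_seq in Hj.
    apply DeltaNK_dilation_low; lra || lia.
Qed.
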